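(* Let $\mathcal H$ be a finite-dimensional Hilbert space, $H(t_i)=\sum_l E^i_l\Pi^i_l$, $H(t_f)=\sum_k E^f_k\Pi^f_k$ Hermitian with spectral projectors, $\beta>0$, $\gamma_{\beta,i}=e^{-\beta H(t_i)}/\mathcal Z_{\beta,i}$, $\gamma_{\beta,f}=e^{-\beta H(t_f)}/\mathcal Z_{\beta,f}$, $\Delta F=-\beta^{-1}\ln(\mathcal Z_{\beta,f}/\mathcal Z_{\beta,i})$. Let $\Phi[X]=\sum_\alpha A_\alpha XA_\alpha^\dagger$ be a CPTP map with a full-rank fixed point $\pi=\Phi[\pi]$, and let $\tilde\Phi[X]=\sum_\alpha\tilde A_\alpha X\tilde A_\alpha^\dagger$ with $\tilde A_\alpha=\pi^{1/2}A_\alpha^\dagger\pi^{-1/2}$. Let the forward and backward initial states be decomposed as $$\rho_i=(1-a)\gamma_{\beta,i}+a(1-c)\tau_d+ac\,\tau_c,\qquad \tilde\rho_i=(1-\tilde a)\gamma_{\beta,f}+\tilde a(1-\tilde c)\tilde\tau_d+\tilde a\tilde c\,\tilde\tau_c,$$ where $a,\tau$ (resp. $\tilde a,\tilde\tau$) are the weight of athermality and minimal athermal state of $\rho_i$ w.r.t. $\gamma_{\beta,i}$ (resp. of $\tilde\rho_i$ w.r.t. $\gamma_{\beta,f}$), and $\tau=(1-c)\tau_d+c\tau_c$ (resp. $\tilde\tau=(1-\tilde c)\tilde\tau_d+\tilde c\tilde\tau_c$) is the weight-of-coherence decomposition w.r.t. the eigenbasis of $H(t_i)$ (resp. $H(t_f)$).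 For an operator $\mathcal A$ set $p^i_l(\mathcal A)=\mathrm{Tr}(\mathcal A\Pi^i_l)$, $p^f_k(\mathcal A)=\mathrm{Tr}(\Phi[\mathcal A]\Pi^f_k)$, $\tilde p^i_k(\mathcal A)=\mathrm{Tr}(\mathcal A\Pi^f_k)$, $\tilde p^f_l(\mathcal A)=\mathrm{Tr}(\tilde\Phi[\mathcal A]\Pi^i_l)$, and $P_\Gamma(l,k)=p^i_l(\rho_i)p^f_k(\rho_i)$, $P_{\tilde\Gamma}(k,l)=\tilde p^i_k(\tilde\rho_i)\tilde p^f_l(\tilde\rho_i)$. Define $\Theta^{(i)}_l=\ln\!\big((1-a)+a(1-c)\tfrac{p^i_l(\tau_d)}{p^i_l(\gamma_{\beta,i})}\big)$, $\Sigma^{(i)}_l=\ln\!\big(1+\tfrac{ac\,p^i_l(\tau_c)}{(1-a)p^i_l(\gamma_{\beta,i})+a(1-c)p^i_l(\tau_d)}\big)$, and $\Theta^{(f)}_k,\Sigma^{(f)}_k$ by the same formulas with $p^i_l$ replaced by $p^f_k$; define $\tilde\Theta^{(i)}_k,\tilde\Sigma^{(i)}_k$ (resp. $\tilde\Theta^{(f)}_l,\tilde\Sigma^{(f)}_l$) by the same formulas with $(a,c,\tau_d,\tau_c,\gamma_{\beta,i})$ replaced by $(\tilde a,\tilde c,\tilde\tau_d,\tilde\tau_c,\gamma_{\beta,f})$ and $p^i_l$ replaced by $\tilde p^i_k$ (resp. $\tilde p^f_l$). Let $\Delta\sigma_{l,k}=\ln p^f_k(\gamma_{\beta,i})-\ln\tilde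 p^f_l(\gamma_{\beta,f})$, $\Delta\Theta_{l,k}=\Theta^{(i)}_l+\Theta^{(f)}_k-\tilde\Theta^{(i)}_k-\tilde\Theta^{(f)}_l$, $\Delta\Sigma_{l,k}=\Sigma^{(i)}_l+\Sigma^{(f)}_k-\tilde\Sigma^{(i)}_k-\tilde\Sigma^{(f)}_l$. Then, for every $(l,k)$ for which these quantities are well defined, $$\Delta s^{l,k}_{\rm tot}:=\ln\frac{P_\Gamma(l,k)}{P_{\tilde\Gamma}(k,l)}=\beta(\Delta E_{l,k}-\Delta F)+\Delta\sigma_{l,k}+\Delta\Theta_{l,k}+\Delta\Sigma_{l,k},\qquad \Delta E_{l,k}=E^f_k-E^i_l.$$
   Context: Weight of athermality: $A_w(\rho)=\min_{\tau\in\mathscr D(\mathcal H)}\{a\ge0:\rho=(1-a)\gamma+a\tau\}$ for a full-rank thermal reference state $\gamma$, with minimal athermal state $\tau$ the optimizer. Weight of coherence w.r.t. a basis: $C_w(\tau)=\min\{c\ge0:\tau=(1-c)\tau_d+c\tau_c,\ \tau_d\text{ diagonal in the basis},\ \tau_c\in\mathscr D(\mathcal H)\}$. Here $\Pi^i_l$ ($\Pi^f_k$) are the spectral projectors of $H(t_i)$ ($H(t_f)$), used in the eigenbasis-related statements as projectors onto eigenvectors. *)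

From HB Require Import structures.
From mathcomp Require Import all_boot all_order all_algebra.
From mathcomp Require Import complex.
From mathcomp Require Import reals sequences exp.
Set Implicit Arguments. Unset Strict Implicit. Unset Printing Implicit Defensive.
Import Order.TTheory GRing.Theory Num.Theory.
Local Open Scope ring_scope.
Local Open Scope complex_scope.

Section QDefs.
Variable R : realType.
Local Notation C := R[i].
Variable n : nat.

Definition adjmx (p q : nat) (A : 'M[C]_(p, q)) : 'M[C]_(q, p) :=
  (map_mx (fun z => z^*) A)^T.

Definition hermitian (A : 'M[C]_n) : Prop := adjmx A = A.

Definition psd (A : 'M[C]_n) : Prop :=
  hermitian A /\ forall x : 'cV[C]_n, 0 <= (adjmx x *m A *m x) 0 0.
Definition posdef (A : 'M[C]_n) : Prop :=
  hermitian A /\ forall x : 'cV[C]_n, x != 0 -> 0 < (adjmx x *m A *m x) 0 0.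

Definition density (A : 'M[C]_n) : Prop := psd A /\ \tr A = 1.

Definition unitary (U : 'M[C]_n) : Prop := adjmx U *m U = 1%:M.

(* A Hermitian operator given by its spectral decomposition: orthonormal
   eigenbasis = columns of the unitary U, eigenvalues E.
   spec_fun U E f = f(H) = sum_l f(E l) Pi_l. *)
Definition spec_fun (U : 'M[C]_n) (E : 'I_n -> R) (f : R -> R) : 'M[C]_n :=
  U *m diag_mx (\row_l (f (E l))%:C) *m adjmx U.

Definition hamiltonian U E := spec_fun U E id.

Definition eproj (U : 'M[C]_n) (l : 'I_n) : 'M[C]_n :=
  col l U *m adjmx (col l U).

Definition partZ (beta : R) U E : R :=
  complex.Re (\tr (spec_fun U E (fun e => expR (- beta * e)))).
Definition gibbs (beta : R) U E : 'M[C]_n :=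
  ((partZ beta U E)^-1)%:C *: spec_fun U E (fun e => expR (- beta * e)).

Definition freeDiff (beta : R) Ui Ei Uf Ef : R :=
  - beta^-1 * ln (partZ beta Uf Ef / partZ beta Ui Ei).

Definition kraus (m : nat) (A : 'I_m -> 'M[C]_n) (X : 'M[C]_n) : 'M[C]_n :=
  \sum_(a < m) (A a *m X *m adjmx (A a)).

Definition trace_preserving (m : nat) (A : 'I_m -> 'M[C]_n) : Prop :=
  \sum_(a < m) (adjmx (A a) *m A a) = 1%:M.

Definition is_psd_sqrt (S P : 'M[C]_n) : Prop := psd S /\ S *m S = P.

(* Petz-recovery (time-reversed) Kraus operators pi^{1/2} A^dag pi^{-1/2},
   where S = pi^{1/2} *)
Definition petz_kraus (m : nat) (S : 'M[C]_n) (A : 'I_m -> 'M[C]_n) :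
  'I_m -> 'M[C]_n := fun a => S *m adjmx (A a) *m invmx S.

(* Tr(X P) (real part; it is real for the Hermitian X used here) *)
Definition ptr (X P : 'M[C]_n) : R := complex.Re (\tr (X *m P)).

Definition mix (a : R) (X Y : 'M[C]_n) : 'M[C]_n :=
  (1 - a)%:C *: X + a%:C *: Y.

Definition weight_athermality (gamma rho : 'M[C]_n) (a : R) (tau : 'M[C]_n)
  : Prop :=
  [/\ 0 <= a, density tau, rho = mix a gamma tau &
      forall (a' : R) (tau' : 'M[C]_n),
        0 <= a' -> density tau' -> rho = mix a' gamma tau' -> a <= a'].

Definition diag_in (U X : 'M[C]_n) : bool := is_diag_mx (adjmx U *m X *m U).

Definition weight_coherence (U tau : 'M[C]_n) (c : R) (taud tauc : 'M[C]_n)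
  : Prop :=
  [/\ 0 <= c, density taud /\ diag_in U taud, density tauc,
      tau = mix c taud tauc &
      forall (c' : R) (taud' tauc' : 'M[C]_n),
        0 <= c' -> density taud' -> diag_in U taud' -> density tauc' ->
        tau = mix c' taud' tauc' -> c <= c'].

End QDefs.

(* Theta and Sigma, given a, c and the probabilities
   pg = p(gamma), pd = p(tau_d), pc = p(tau_c) *)
Section ThetaSigma.
Variable R : realType.
Local Open Scope ring_scope.
Definition theta_arg (a c pg pd : R) : R := (1 - a) + a * (1 - c) * (pd / pg).
Definition Theta (a c pg pd : R) : R := ln (theta_arg a c pg pd).
Definition sigma_den (a c pg pd : R) : R := (1 - a) * pg + a * (1 - c) * pd.
Definition sigma_arg (a c pg pd pc : R) : R :=
  1 + a * c * pc / sigma_den a c pg pd.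
Definition Sigma (a c pg pd pc : R) : R := ln (sigma_arg a c pg pd pc).
End ThetaSigma.

Section Probs.
Variable R : realType.
Variable n : nat.
Local Open Scope ring_scope.
Definition pI (U : 'M[R[i]]_n) (l : 'I_n) (X : 'M[R[i]]_n) : R :=
  ptr X (eproj U l).
Definition pF (m : nat) (A : 'I_m -> 'M[R[i]]_n) (U : 'M[R[i]]_n) (k : 'I_n)
  (X : 'M[R[i]]_n) : R := ptr (kraus A X) (eproj U k).
End Probs.

From HB Require Import structures.
From mathcomp Require Import all_boot all_order all_algebra.
From mathcomp Require Import complex.
From mathcomp Require Import reals sequences exp.
From mathcomp Require Import lra ring.
Set Implicit Arguments. Unset Strict Implicit. Unset Printing Implicit Defensive.
Import Order.TTheory GRing.Theory Num.Theory.
Local Open Scope ring_scope.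
Local Open Scope complex_scope.

(** Each of the four probabilities is a real-linear functional [p] of the
    state, so the decomposition [rho = (1-a) gamma + a ((1-c) tau_d + c tau_c)]
    factors [p rho] as [p gamma * theta_arg * sigma_arg]; the logarithm of the
    ratio of path probabilities thus splits into [dTheta], [dSigma] and four
    Gibbs terms.  The two Gibbs probabilities read in the eigenbasis of their
    own Hamiltonian are Boltzmann weights [exp (- beta E) / Z], whose log-ratio
    is [beta (dE - dF)]; the two seen through a channel make up [dsigma]. *)

Section ThetaSigma.
Variable R : realType.
Variables a c pg pd pc : R.

Lemma mix_theta_sigma : pg != 0 -> sigma_den a c pg pd != 0 ->
  (1 - a) * pg + a * ((1 - c) * pd + c * pc)
  = pg * theta_arg a c pg pd * sigma_arg a c pg pd pc.
Proof. by rewrite /theta_arg /sigma_arg /sigma_den => hg hs; field; rewrite hs hg. Qed.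

Lemma ln_mix_Theta_Sigma : 0 < pg ->
  0 < theta_arg a c pg pd -> sigma_den a c pg pd != 0 ->
  0 < sigma_arg a c pg pd pc ->
  0 < (1 - a) * pg + a * ((1 - c) * pd + c * pc) /\
  ln ((1 - a) * pg + a * ((1 - c) * pd + c * pc))
  = ln pg + Theta a c pg pd + Sigma a c pg pd pc.
Proof.
move=> hg ht hs hsa; rewrite mix_theta_sigma ?(gt_eqF hg) //.
by rewrite !mulr_gt0 // !lnM ?posrE ?mulr_gt0.
Qed.

End ThetaSigma.

Lemma ln_mul_div_mul (R : realType) (x1 x2 y1 y2 : R) :
  0 < x1 -> 0 < x2 -> 0 < y1 -> 0 < y2 ->
  ln (x1 * x2 / (y1 * y2)) = ln x1 + ln x2 - ln y1 - ln y2.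
Proof.
move=> hx1 hx2 hy1 hy2.
by rewrite ln_div ?posrE ?mulr_gt0 // !lnM ?posrE // opprD addrA.
Qed.

Lemma ln_boltzmann_ratio (R : realType) (beta Zi Zf ei ef xi xf : R) :
  beta != 0 -> 0 < Zi -> 0 < Zf ->
  xi = - ln Zi - beta * ei -> xf = - ln Zf - beta * ef ->
  beta * (ef - ei - (- beta^-1 * ln (Zf / Zi))) = xi - xf.
Proof.
move=> hb hZi hZf -> ->; rewrite ln_div ?posrE // mulrBr mulrA mulrN divff //.
lra.
Qed.

Section RealPart.
Variable R : realType.

Lemma ReD (x y : R[i]) : complex.Re (x + y) = complex.Re x + complex.Re y.
Proof. exact: (@raddfD _ _ (@complex.Re R : Rcomplex R -> R)). Qed.

Lemma Re_sum (I : Type) (r : seq I) (P : pred I) (F : I -> R[i]) :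
  complex.Re (\sum_(j <- r | P j) F j) = \sum_(j <- r | P j) complex.Re (F j).
Proof. exact: (@raddf_sum _ _ (@complex.Re R : Rcomplex R -> R)). Qed.

Lemma ReMr (r : R) (x : R[i]) : complex.Re (r%:C * x) = r * complex.Re x.
Proof. by case: x => x1 x2 /=; rewrite mul0r subr0. Qed.

End RealPart.

Section Probabilities.
Variable R : realType.
Variable n : nat.
Implicit Types (X Y P U : 'M[R[i]]_n) (a : R).

Definition mix_linear (p : 'M[R[i]]_n -> R) :=
  forall a X Y, p (mix a X Y) = (1 - a) * p X + a * p Y.

Lemma ptrD X Y P : ptr (X + Y) P = ptr X P + ptr Y P.
Proof. by rewrite /ptr mulmxDl mxtraceD ReD. Qed.

Lemma ptrZ (r : R) X P : ptr (r%:C *: X) P = r * ptr X P.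
Proof. by rewrite /ptr -scalemxAl mxtraceZ ReMr. Qed.

Lemma ptr_mix_linear P : mix_linear (fun X => ptr X P).
Proof. by move=> a X Y; rewrite /mix ptrD !ptrZ. Qed.

Lemma kraus_mix m (A : 'I_m -> 'M[R[i]]_n) a X Y :
  kraus A (mix a X Y) = mix a (kraus A X) (kraus A Y).
Proof.
rewrite /kraus /mix !scaler_sumr -big_split; apply: eq_bigr => j _.
by rewrite mulmxDr !mulmxDl -!scalemxAr -!scalemxAl.
Qed.

Lemma pI_mix_linear U l : mix_linear (pI U l).
Proof. exact: ptr_mix_linear. Qed.

Lemma pF_mix_linear m (A : 'I_m -> 'M[R[i]]_n) U k : mix_linear (pF A U k).
Proof. by move=> a X Y; rewrite /pF kraus_mix ptr_mix_linear. Qed.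

Lemma ln_mix_linear_Theta_Sigma (p : 'M[R[i]]_n -> R) a c g td tc :
  mix_linear p -> 0 < p g ->
  0 < theta_arg a c (p g) (p td) -> sigma_den a c (p g) (p td) != 0 ->
  0 < sigma_arg a c (p g) (p td) (p tc) ->
  0 < p (mix a g (mix c td tc)) /\
  ln (p (mix a g (mix c td tc)))
  = ln (p g) + Theta a c (p g) (p td) + Sigma a c (p g) (p td) (p tc).
Proof. by move=> hp; rewrite !hp; apply: ln_mix_Theta_Sigma. Qed.

Lemma mulmx_col p q r (A : 'M[R[i]]_(p, q)) (B : 'M[R[i]]_(q, r)) j :
  A *m col j B = col j (A *m B).
Proof. exact: mulmx_colsub. Qed.

Lemma adjmx_col U l : adjmx (col l U) = row l (adjmx U).
Proof. by apply/matrixP => i j; rewrite !mxE. Qed.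

Lemma ptr_spec_fun_eproj U (E : 'I_n -> R) (f : R -> R) l : unitary U ->
  ptr (spec_fun U E f) (eproj U l) = f (E l).
Proof.
move=> hU; rewrite /ptr /spec_fun /eproj mulmxA mxtrace_mulC !mulmxA adjmx_col.
rewrite -row_mul hU -!mulmxA mulmx_col hU mulmx_col mulmx1 -row_mul mul1mx.
by rewrite /mxtrace big_ord1 !mxE eqxx mulr1n.
Qed.

Lemma partZE (beta : R) U (E : 'I_n -> R) : unitary U ->
  partZ beta U E = \sum_j expR (- beta * E j).
Proof.
move=> hU; rewrite /partZ /spec_fun mxtrace_mulC mulmxA hU mul1mx /mxtrace Re_sum.
by apply: eq_bigr => j _; rewrite !mxE eqxx mulr1n.
Qed.

(* The index [l] only witnesses that the space is nonzero. *)
Lemma partZ_gt0 (beta : R) U (E : 'I_n -> R) (l : 'I_n) :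
  unitary U -> 0 < partZ beta U E.
Proof.
move=> hU; rewrite partZE // (bigD1 l) //= ltr_wpDr ?expR_gt0 //.
by apply: sumr_ge0 => j _; apply: ltW; apply: expR_gt0.
Qed.

Lemma pI_gibbs (beta : R) U (E : 'I_n -> R) l : unitary U ->
  pI U l (gibbs beta U E) = (partZ beta U E)^-1 * expR (- beta * E l).
Proof. by move=> hU; rewrite /pI /gibbs ptrZ ptr_spec_fun_eproj. Qed.

Lemma pI_gibbs_gt0 (beta : R) U (E : 'I_n -> R) l : unitary U ->
  0 < pI U l (gibbs beta U E).
Proof.
move=> hU; have hZ := partZ_gt0 beta E l hU.
by rewrite pI_gibbs // mulr_gt0 ?invr_gt0 ?expR_gt0.
Qed.

Lemma ln_pI_gibbs (beta : R) U (E : 'I_n -> R) l : unitary U ->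
  ln (pI U l (gibbs beta U E)) = - ln (partZ beta U E) - beta * E l.
Proof.
move=> hU; have hZ := partZ_gt0 beta E l hU.
by rewrite pI_gibbs // lnM ?posrE ?invr_gt0 ?expR_gt0 // lnV ?posrE // expRK mulNr.
Qed.

Lemma ln_pI_gibbs_ratio (beta : R) Ui Uf (Ei Ef : 'I_n -> R) l k :
  0 < beta -> unitary Ui -> unitary Uf ->
  beta * (Ef k - Ei l - freeDiff beta Ui Ei Uf Ef)
  = ln (pI Ui l (gibbs beta Ui Ei)) - ln (pI Uf k (gibbs beta Uf Ef)).
Proof.
move=> hb hUi hUf.
exact: ln_boltzmann_ratio (lt0r_neq0 hb) (partZ_gt0 beta Ei l hUi)
  (partZ_gt0 beta Ef l hUf) (ln_pI_gibbs beta Ei l hUi) (ln_pI_gibbs beta Ef k hUf).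
Qed.

End Probabilities.

Theorem mainTheorem4 (R : realType) (n m : nat) (beta : R)
  (Ui Uf : 'M[R[i]]_n) (Ei Ef : 'I_n -> R)
  (A : 'I_m -> 'M[R[i]]_n) (pi S : 'M[R[i]]_n)
  (rho rhot : 'M[R[i]]_n)
  (a c : R) (tau taud tauc : 'M[R[i]]_n)
  (aT cT : R) (taut taudt tauct : 'M[R[i]]_n)
  (l k : 'I_n) :
  0 < beta ->
  unitary Ui -> unitary Uf ->
  trace_preserving A ->
  density pi -> posdef pi -> kraus A pi = pi -> is_psd_sqrt S pi ->
  density rho -> density rhot ->
  weight_athermality (gibbs beta Ui Ei) rho a tau ->
  weight_coherence Ui tau c taud tauc ->
  weight_athermality (gibbs beta Uf Ef) rhot aT taut ->
  weight_coherence Uf taut cT taudt tauct ->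
  let gi := gibbs beta Ui Ei in
  let gf := gibbs beta Uf Ef in
  let At := petz_kraus S A in
  (* p^i_l, p^f_k, ~p^i_k, ~p^f_l *)
  let p_i := pI Ui l in
  let p_f := pF A Uf k in
  let pt_i := pI Uf k in
  let pt_f := pF At Ui l in
  let PG := p_i rho * p_f rho in
  let PGt := pt_i rhot * pt_f rhot in
  (* well-definedness of all quantities for this (l, k) *)
  0 < p_f gi -> 0 < pt_f gf ->
  0 < theta_arg a c (p_i gi) (p_i taud) ->
  0 < theta_arg a c (p_f gi) (p_f taud) ->
  0 < theta_arg aT cT (pt_i gf) (pt_i taudt) ->
  0 < theta_arg aT cT (pt_f gf) (pt_f taudt) ->
  sigma_den a c (p_i gi) (p_i taud) != 0 ->
  sigma_den a c (p_f gi) (p_f taud) != 0 ->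
  sigma_den aT cT (pt_i gf) (pt_i taudt) != 0 ->
  sigma_den aT cT (pt_f gf) (pt_f taudt) != 0 ->
  0 < sigma_arg a c (p_i gi) (p_i taud) (p_i tauc) ->
  0 < sigma_arg a c (p_f gi) (p_f taud) (p_f tauc) ->
  0 < sigma_arg aT cT (pt_i gf) (pt_i taudt) (pt_i tauct) ->
  0 < sigma_arg aT cT (pt_f gf) (pt_f taudt) (pt_f tauct) ->
  PGt != 0 -> 0 < PG / PGt ->
  let dE := Ef k - Ei l in
  let dF := freeDiff beta Ui Ei Uf Ef in
  let dsigma := ln (p_f gi) - ln (pt_f gf) in
  let dTheta := Theta a c (p_i gi) (p_i taud) + Theta a c (p_f gi) (p_f taud)
              - Theta aT cT (pt_i gf) (pt_i taudt)
              - Theta aT cT (pt_f gf) (pt_f taudt) in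
  let dSigma := Sigma a c (p_i gi) (p_i taud) (p_i tauc)
              + Sigma a c (p_f gi) (p_f taud) (p_f tauc)
              - Sigma aT cT (pt_i gf) (pt_i taudt) (pt_i tauct)
              - Sigma aT cT (pt_f gf) (pt_f taudt) (pt_f tauct) in
  ln (PG / PGt) = beta * (dE - dF) + dsigma + dTheta + dSigma.
Proof.
move=> hb hUi hUf _ _ _ _ _ _ _ [_ _ -> _] [_ _ _ -> _] [_ _ -> _] [_ _ _ -> _].
move=> gi gf At p_i p_f pt_i pt_f PG PGt hpf hptf ht1 ht2 ht3 ht4.
move=> hs1 hs2 hs3 hs4 hsa1 hsa2 hsa3 hsa4 _ _ dE dF dsigma dTheta dSigma.
have hW : beta * (dE - dF) = ln (p_i gi) - ln (pt_i gf) :=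
  ln_pI_gibbs_ratio Ei Ef l k hb hUi hUf.
have [P1 L1] := ln_mix_linear_Theta_Sigma (p := p_i) (pI_mix_linear Ui l)
  (pI_gibbs_gt0 beta Ei l hUi) ht1 hs1 hsa1.
have [P2 L2] := ln_mix_linear_Theta_Sigma (p := p_f) (pF_mix_linear A Uf k)
  hpf ht2 hs2 hsa2.
have [P3 L3] := ln_mix_linear_Theta_Sigma (p := pt_i) (pI_mix_linear Uf k)
  (pI_gibbs_gt0 beta Ef k hUf) ht3 hs3 hsa3.
have [P4 L4] := ln_mix_linear_Theta_Sigma (p := pt_f) (pF_mix_linear At Ui l)
  hptf ht4 hs4 hsa4.
(* Opaque probabilities keep the rewrites and [lra] below from unfolding
   distinct ones into matrix traces when comparing them. *)
clearbody p_i p_f pt_i pt_f.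
rewrite /PG /PGt (ln_mul_div_mul P1 P2 P3 P4) L1 L2 L3 L4 hW.
rewrite /dsigma /dTheta /dSigma; lra.
Qed.
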